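(* Let $\mathcal{X}' := \mathcal{X}\times\mathcal{X}^{|\mathcal{N}|}$, let $\Phi:\mathcal{X}'\to\mathcal{R}$ be a one-to-one (invertible) representation function with inverse $\Psi:\mathcal{R}\to\mathcal{X}'$, and write $r=\Phi(\mathbf{x})$. Let $h:\mathcal{R}\times\{0,1\}\times[0,1]\to\mathcal{Y}$ be a hypothesis and $L:\mathcal{Y}\times\mathcal{Y}\to\mathbb{R}_+$ a loss function. Let $w_\eta$ be a weight function and $q_\eta(\mathbf{x}\mid t,z)$ the associated reweighted distribution (see context). Let $G$ be a family of real-valued functions on $\mathcal{R}\times\{0,1\}\times[0,1]$, and assume there is a constant $B_\Phi>0$ such that the function $(r,t,z)\mapsto \frac{1}{B_\Phi}\,\ell_{h,\Phi}(\Psi(r),t,z)$ belongs to $G$. Then $$\epsilon_{CF}\le \epsilon_F^{\eta}+B_\Phi\cdot \mathrm{IPM}_G\big(p_\Phi(r)\,p(t,z),\; q_{\Phi,\eta}(r\mid t,z)\,p(t,z)\big),$$ where $p_\Phi(r)$ and $q_{\Phi,\eta}(r\mid t,z)$ are the distributions of $r=\Phi(\mathbf{x})$ when $\mathbf{x}\sim p(\mathbf{x})$ and $\mathbf{x}\sim q_\eta(\mathbf{x}\mid t,z)$, respectively.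
   Context: Setting: each unit has a combined feature vector $\mathbf{x}\in\mathcal{X}'=\mathcal{X}\times\mathcal{X}^{|\mathcal{N}|}$ (its own features and its neighbours' features), a binary individual treatment $t\in\{0,1\}$ and a neighbourhood exposure $z\in[0,1]$. There is a joint distribution of $(\mathbf{x},t,z)$ with marginals $p(\mathbf{x})$, $p(t,z)$ and conditionals $p(\mathbf{x}\mid t,z)$. For each $(t,z)$ there is a potential outcome $y(t,z)\in\mathcal{Y}$ with conditional density $p(y(t,z)\mid\mathbf{x})$. Per-unit expected loss: $\ell_{h,\Phi}(\mathbf{x},t,z)=\int_{\mathcal{Y}} L\big(y(t,z),h(\Phi(\mathbf{x}),t,z)\big)\,p(y(t,z)\mid\mathbf{x})\,dy(t,z)$. Factual loss: $\epsilon_F=\mathbb{E}_{p(t,z)}\big[\int \ell_{h,\Phi}(\mathbf{x},t,z)\,p(\mathbf{x}\mid t,z)\,d\mathbf{x}\big]$. Counterfactual loss: $\epsilon_{CF}=\mathbb{E}_{p(t,z)}\Big[\mathbb{E}_{p(t',z')}\big[\int \ell_{h,\Phi}(\mathbf{x},t,z)\,p(\mathbf{x}\mid t',z')\,d\mathbf{x}\big]\Big]$, where $(t',z')$ is an independent copy with distribution $p(t,z)$. Weights: $w_\eta:\{0,1\}\times[0,1]\times\mathcal{X}'\to(0,\infty)$ is a weight function such that for every $(t,z)$ the normalizer $c(t,z)=\int w_\eta(t,z,\mathbf{x})p(\mathbf{x}\mid t,z)d\mathbf{x}$ is finite and positive; the reweighted distribution is $q_\eta(\mathbf{x}\mid t,z)=w_\eta(t,z,\mathbf{x})p(\mathbf{x}\mid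 t,z)/c(t,z)$. Reweighted factual loss: $\epsilon_F^{\eta}=\mathbb{E}_{p(t,z)}\big[\int \ell_{h,\Phi}(\mathbf{x},t,z)\,q_\eta(\mathbf{x}\mid t,z)\,d\mathbf{x}\big]$. Integral probability metric: for distributions $P,Q$ on $\mathcal{R}\times\{0,1\}\times[0,1]$, $\mathrm{IPM}_G(P,Q)=\sup_{g\in G}\left|\int g\,dP-\int g\,dQ\right|$; here $p_\Phi(r)p(t,z)$ is the product distribution and $q_{\Phi,\eta}(r\mid t,z)p(t,z)$ is the joint distribution with $(t,z)\sim p(t,z)$ and then $r\sim q_{\Phi,\eta}(\cdot\mid t,z)$. *)

From HB Require Import structures.
From mathcomp Require Import all_boot all_order all_algebra.
From mathcomp Require Import all_classical all_reals all_analysis.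
Set Implicit Arguments.
Unset Strict Implicit.
Unset Printing Implicit Defensive.
Import Order.TTheory GRing.Theory Num.Theory.
Local Open Scope classical_set_scope.
Local Open Scope ring_scope.
Local Open Scope ereal_scope.

(* Conventions.
   - The treatment/exposure space {0,1} x [0,1] is represented by the
     measurable type  TZ R := bool * R  (the distribution p(t,z) is assumed
     to be concentrated on bool * [0,1] in the theorem).
   - X' (combined features) , the representation space R_sp and the outcome
     space Y are measurable types.
   - p(t,z)    : PT  : probability (TZ R) R
   - p(x|t,z)  : Px  : probability kernel  TZ ~> X'
   - p(y(t,z)|x) : Py : probability kernel (X' * TZ) ~> Y
   Distributions are handled as (set-function) measures; "density" integrals
   int f(x) p(x|t,z) dx are written as Lebesgue integrals against Px (t,z). *)

Notation TZ R := (bool * R)%type.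

Section defs.
Context {R : realType}.
Context {dX dR dY : measure_display}
  {X : measurableType dX} {Rsp : measurableType dR} {Y : measurableType dY}.

Definition unit_loss (Py : R.-pker (X * TZ R) ~> Y) (L : Y -> Y -> R)
    (h : Rsp * TZ R -> Y) (Phi : X -> Rsp) (x : X) (tz : TZ R) : \bar R :=
  \int[Py (x, tz)]_y (L y (h (Phi x, tz)))%:E.

Definition marginal_x (PT : set (TZ R) -> \bar R) (Px : R.-pker TZ R ~> X)
    : set X -> \bar R :=
  fun A => \int[PT]_tz Px tz A.

Definition wnorm (Px : R.-pker TZ R ~> X) (w : TZ R -> X -> R) (tz : TZ R) : R :=
  fine (\int[Px tz]_x (w tz x)%:E).

Definition reweighted (Px : R.-pker TZ R ~> X) (w : TZ R -> X -> R)
    (tz : TZ R) : set X -> \bar R :=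
  fun A => \int[Px tz]_(x in A) (w tz x / wnorm Px w tz)%:E.

Definition eps_F (PT : set (TZ R) -> \bar R) (Px : R.-pker TZ R ~> X)
    (ell : X -> TZ R -> \bar R) : \bar R :=
  \int[PT]_tz \int[Px tz]_x ell x tz.

(* counterfactual loss epsilon_CF, with (t',z') an independent copy *)
Definition eps_CF (PT : set (TZ R) -> \bar R) (Px : R.-pker TZ R ~> X)
    (ell : X -> TZ R -> \bar R) : \bar R :=
  \int[PT]_tz \int[PT]_tz' \int[Px tz']_x ell x tz.

Definition eps_F_eta (PT : set (TZ R) -> \bar R) (Px : R.-pker TZ R ~> X)
    (w : TZ R -> X -> R) (ell : X -> TZ R -> \bar R) : \bar R :=
  \int[PT]_tz \int[reweighted Px w tz]_x ell x tz.

Definition joint_cond (PT : set (TZ R) -> \bar R)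
    (k : TZ R -> set Rsp -> \bar R) : set (Rsp * TZ R) -> \bar R :=
  fun A => \int[PT]_tz k tz (ysection A tz).

Definition IPM {d} {T : measurableType d} (G : set (T -> R))
    (P Q : set T -> \bar R) : \bar R :=
  ereal_sup [set `| \int[P]_u (g u)%:E - \int[Q]_u (g u)%:E |
             | g in G].

End defs.

From HB Require Import structures.
From mathcomp Require Import all_boot all_order all_algebra.
From mathcomp Require Import all_classical all_reals all_analysis.
From mathcomp Require Import measurable_realfun.
Import Order.TTheory GRing.Theory Num.Theory.
Local Open Scope classical_set_scope.
Local Open Scope ring_scope.
Local Open Scope ereal_scope.

(* Since [Phi] is injective, the per-unit loss factors as
   [ell x (t,z) = B_Phi * g (Phi x, (t,z))] with [g] in [G].  The counterfactual
   loss draws [(t',z')] independently of [(t,z)], so by Tonelli it is [B_Phi]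
   times the integral of [g] against [p_Phi(r) p(t,z)]; likewise the reweighted
   factual loss is [B_Phi] times the integral of [g] against
   [q_{Phi,eta}(r|t,z) p(t,z)].  The two integrals differ by at most the IPM
   over [G], and [a <= b + |a - b|] concludes. *)

Lemma lee_addl_abse_sub {R : realDomainType} (a : \bar R) {b : \bar R} :
  0 <= b -> a <= b + `|a - b|.
Proof.
case: b => [b| |] // _; last first.
  by rewrite addye ?leey // gt_eqF // (lt_le_trans _ (abse_ge0 _)) ?ltNy0.
case: a => [a| |] //=.
by rewrite -EFinD lee_fin -lerBlDl ler_norm.
Qed.

Lemma integral_le_add_IPM d (T : measurableType d) (R : realType)
    (P Q : set T -> \bar R) (G : set (T -> R)) (g : T -> R) (B : R) :
  G g -> (0 <= B)%R -> 0 <= \int[Q]_u (g u)%:E ->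
  B%:E * \int[P]_u (g u)%:E <= B%:E * \int[Q]_u (g u)%:E + B%:E * IPM G P Q.
Proof.
move=> Gg B0 Qg0.
have dist_le : `|\int[P]_u (g u)%:E - \int[Q]_u (g u)%:E| <= IPM G P Q.
  by apply: ereal_sup_ubound; exists g.
rewrite -ge0_muleDr //; last exact: le_trans (abse_ge0 _) dist_le.
apply: lee_wpmul2l; first by rewrite lee_fin.
by apply: le_trans (lee_addl_abse_sub _ Qg0) _; rewrite leeD2l.
Qed.

Section kunit.
Context {d} {T : measurableType d} {R : realType} (P : probability T R).

Definition kunit : unit -> {measure set T -> \bar R} := fun=> P.

HB.instance Definition _ :=
  isKernel.Build _ _ unit T R kunit (fun U mU => measurable_cst _).
HB.instance Definition _ :=
  Kernel_isProbability.Build _ _ _ _ _ kunit (fun=> probability_setT P).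

End kunit.

Section ksnd.
Context {d d' d''} {S : measurableType d} {T : measurableType d'}
  {X : measurableType d''} {R : realType} (k : R.-pker T ~> X).

Definition ksnd : S * T -> {measure set X -> \bar R} := fun p => k p.2.

Lemma measurable_ksnd U : measurable U -> measurable_fun setT (ksnd ^~ U).
Proof. by move=> mU; exact: measurableT_comp (measurable_kernel k U mU) _. Qed.

HB.instance Definition _ := isKernel.Build _ _ _ _ R ksnd measurable_ksnd.
HB.instance Definition _ :=
  Kernel_isProbability.Build _ _ _ _ _ ksnd (fun p => prob_kernel p.2).

End ksnd.

Section marginal_x.
Context {R : realType} {dX} {X : measurableType dX}
  (PT : probability (TZ R) R) (Px : R.-pker TZ R ~> X).

HB.instance Definition _ :=
  Measure.copy (marginal_x PT Px) (kcomp (kunit PT) (ksnd (S := unit) Px) tt).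

Let marginal_x_setT : marginal_x PT Px setT = 1.
Proof.
rewrite /marginal_x (eq_integral (cst 1)) => [|tz _]; last exact: prob_kernel.
by rewrite integral_cst // mul1e; exact: probability_setT.
Qed.

HB.instance Definition _ :=
  Measure_isProbability.Build _ _ _ (marginal_x PT Px) marginal_x_setT.

Lemma integral_marginal_x f : (forall x, 0 <= f x) -> measurable_fun setT f ->
  \int[marginal_x PT Px]_x f x = \int[PT]_tz \int[Px tz]_x f x.
Proof.
by move=> f0 mf; rewrite -[marginal_x _ _]/(kcomp (kunit PT) (ksnd Px) tt) integral_kcomp.
Qed.

End marginal_x.

Section distribution_product.
Context {R : realType} {d1 d2 d3} {X : measurableType d1} {Y : measurableType d2}
  {Z : measurableType d3} (mu : probability X R) (nu : probability Z R)
  (phi : {mfun X >-> Y}).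

Lemma integral_distribution_product f :
  measurable_fun setT f -> (forall u, 0 <= f u) ->
  \int[distribution mu phi \x nu]_u f u = \int[nu]_z \int[mu]_x f (phi x, z).
Proof.
move=> mf f0; rewrite fubini_tonelli2 //; apply: eq_integral => z _.
by rewrite /fubini_G ge0_integral_distribution //; exact: measurable_fun_pair1.
Qed.

End distribution_product.

Section joint_cond_pushforward.
Context {R : realType} {dX dR} {X : measurableType dX} {Rsp : measurableType dR}.
Variables (PT : probability (TZ R) R) (k : TZ R -> probability X R).
Hypothesis mk : forall U, measurable U -> measurable_fun setT (k ^~ U).
Variables (phi : X -> Rsp) (mphi : measurable_fun setT phi).

Definition kprob : TZ R -> {measure set X -> \bar R} := k.

HB.instance Definition _ := isKernel.Build _ _ _ _ R kprob mk.
HB.instance Definition _ :=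
  Kernel_isProbability.Build _ _ _ _ _ kprob (fun tz => probability_setT (k tz)).

Definition pair_phi (tz : TZ R) (x : X) : Rsp * TZ R := (phi x, tz).

Lemma measurable_pair_phi tz : measurable_fun setT (pair_phi tz).
Proof. exact: measurable_fun_pair mphi (measurable_cst _). Qed.

HB.instance Definition _ tz :=
  isMeasurableFun.Build _ _ _ _ (pair_phi tz) (measurable_pair_phi tz).

Definition kjoint (p : unit * TZ R) : {measure set (Rsp * TZ R) -> \bar R} :=
  distribution (k p.2) (pair_phi p.2).

Lemma measurable_kjoint U : measurable U -> measurable_fun setT (kjoint ^~ U).
Proof.
move=> mU.
have mpU tz : measurable (pair_phi tz @^-1` U).
  by rewrite -[X in measurable X]setTI; exact: measurable_pair_phi.
have -> : kjoint ^~ U =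
    (fun tz => \int[kprob tz]_x (\1_U (phi x, tz))%:E) \o snd.
  apply/funext => -[_ tz] /=.
  rewrite (eq_integral (fun x => (\1_(pair_phi tz @^-1` U) x)%:E)).
    by rewrite integral_indic // setIT.
  by move=> x _; rewrite !indicE.
apply: measurableT_comp measurable_snd.
apply: (measurable_fun_integral_finite_kernel
  (fun q : TZ R * X => (\1_U (phi q.2, q.1))%:E)) => //.
apply/measurable_EFinP; apply: measurableT_comp (measurable_indic mU) _.
exact: measurable_fun_pair (measurableT_comp mphi measurable_snd) measurable_fst.
Qed.

HB.instance Definition _ := isKernel.Build _ _ _ _ R kjoint measurable_kjoint.
HB.instance Definition _ :=
  Kernel_isProbability.Build _ _ _ _ _ kjoint (fun p => probability_setT (kjoint p)).

Let joint_condE :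
  joint_cond PT (fun tz => pushforward (k tz) phi) = kcomp (kunit PT) kjoint tt.
Proof.
apply/funext => A; apply: eq_integral => tz _.
by congr (k tz _); apply/funext => x; rewrite /ysection /= in_setE.
Qed.

Lemma integral_joint_cond_pushforward f :
  (forall u, 0 <= f u) -> measurable_fun setT f ->
  \int[joint_cond PT (fun tz => pushforward (k tz) phi)]_u f u =
  \int[PT]_tz \int[k tz]_x f (phi x, tz).
Proof.
move=> f0 mf; rewrite joint_condE integral_kcomp //; apply: eq_integral => tz _.
exact: ge0_integral_distribution.
Qed.

(* Outside this section [joint_cond PT _] is not canonically a measure. *)
Lemma ge0_integral_joint_cond_pushforwardZl f (c : R) :
  (forall u, 0 <= f u) -> measurable_fun setT f -> (0 <= c)%R ->
  \int[joint_cond PT (fun tz => pushforward (k tz) phi)]_u (c%:E * f u) =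
  c%:E * \int[joint_cond PT (fun tz => pushforward (k tz) phi)]_u f u.
Proof. by move=> f0 mf c0; rewrite joint_condE ge0_integralZl_EFin. Qed.

End joint_cond_pushforward.

Section reweighted.
Context {R : realType} {dX : measure_display} {X : measurableType dX}.
Context {Px : R.-pker TZ R ~> X} {w : TZ R -> X -> R}.
Hypothesis w_gt0 : forall tz x, (0 < w tz x)%R.
Hypothesis mw : measurable_fun setT (fun p : TZ R * X => w p.1 p.2).
Hypothesis wnorm_fin : forall tz, 0 < \int[Px tz]_x (w tz x)%:E < +oo.

Local Notation c := (wnorm Px w).

Lemma wnormE tz : (c tz)%:E = \int[Px tz]_x (w tz x)%:E.
Proof. by have /andP[/ltW ? ?] := wnorm_fin tz; rewrite fineK // ge0_fin_numE. Qed.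

Lemma wnorm_gt0 tz : (0 < c tz)%R.
Proof. by rewrite -lte_fin wnormE; have /andP[] := wnorm_fin tz. Qed.

Lemma measurable_wnorm : measurable_fun setT c.
Proof.
apply: measurableT_comp (fine_measurable _) _ => //.
apply: (measurable_fun_integral_finite_kernel (fun p : TZ R * X => (w p.1 p.2)%:E)).
- by move=> p; rewrite lee_fin ltW.
- exact/measurable_EFinP.
Qed.

Lemma measurable_wnormV : measurable_fun setT (fun tz => (c tz)^-1)%R.
Proof.
apply: (@measurable_comp _ _ _ _ _ _ [set r : R | r != 0%R]) => //.
- exact: open_measurable.
- by move=> _ [tz _ <-]; exact/lt0r_neq0/wnorm_gt0.
- apply: open_continuous_measurable_fun => //; apply/in_setP => x /= x0.
  exact: inv_continuous.
- exact: measurable_wnorm.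
Qed.

Let density (p : TZ R * X) : R := w p.1 p.2 / c p.1.

Let density_ge0 p : (0 <= density p)%R.
Proof. by rewrite divr_ge0 // ltW // wnorm_gt0. Qed.

Let measurable_density : measurable_fun setT density.
Proof. exact: measurable_funM mw (measurableT_comp measurable_wnormV measurable_fst). Qed.

Section reweighted_measure.
Variable tz : TZ R.

Let density_tz_ge0 x : 0 <= (density (tz, x))%:E.
Proof. by rewrite lee_fin. Qed.

Let measurable_density_tz : measurable_fun setT (fun x => (density (tz, x))%:E).
Proof. exact/measurable_EFinP/measurable_fun_pair2. Qed.

Let reweighted0 : reweighted Px w tz set0 = 0.
Proof. exact: integral_set0. Qed.

Let reweighted_ge0 A : 0 <= reweighted Px w tz A.
Proof. by apply: integral_ge0 => x _; exact: density_tz_ge0. Qed.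

Let reweighted_sigma_additive : semi_sigma_additive (reweighted Px w tz).
Proof.
move=> F mF tF mUF; rewrite /reweighted ge0_integral_bigcup //.
- apply: is_cvg_ereal_nneg_natsum_cond => n _ _.
  by apply: integral_ge0 => x _; exact: density_tz_ge0.
- exact: measurable_funTS measurable_density_tz.
- by move=> x _; exact: density_tz_ge0.
Qed.

HB.instance Definition _ := isMeasure.Build _ _ _ (reweighted Px w tz)
  reweighted0 reweighted_ge0 reweighted_sigma_additive.

Let reweighted_setT : reweighted Px w tz setT = 1.
Proof.
rewrite /reweighted; under eq_integral do rewrite EFinM.
rewrite ge0_integralZr //.
- by rewrite -wnormE -EFinM divff // gt_eqF // wnorm_gt0.
- exact/measurable_EFinP/(measurable_fun_pair2 tz mw).
- by move=> x _; rewrite lee_fin ltW.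
- by rewrite lee_fin invr_ge0 ltW // wnorm_gt0.
Qed.

HB.instance Definition _ :=
  Measure_isProbability.Build _ _ _ (reweighted Px w tz) reweighted_setT.

End reweighted_measure.

Lemma measurable_reweighted U :
  measurable U -> measurable_fun setT (reweighted Px w ^~ U).
Proof.
move=> mU.
have -> : reweighted Px w ^~ U =
    fun tz => \int[Px tz]_x (density (tz, x) * \1_U x)%:E.
  apply/funext => tz; rewrite /reweighted integral_mkcond.
  by apply: eq_integral => x _; rewrite patchE indicE; case: ifP; rewrite ?mulr1 ?mulr0.
apply: (measurable_fun_integral_finite_kernel
  (fun p : TZ R * X => (density p * \1_U p.2)%:E)).
- by move=> p; rewrite lee_fin mulr_ge0.
- apply/measurable_EFinP/measurable_funM => //.
  exact: measurableT_comp (measurable_indic mU) measurable_snd.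
Qed.

Section counterfactual.
Context {dR dY : measure_display} {Rsp : measurableType dR} {Y : measurableType dY}.
Context {PT : probability (TZ R) R} {Phi : X -> Rsp}.
Hypothesis mPhi : measurable_fun setT Phi.
Context {Py : R.-pker (X * TZ R) ~> Y} {Psi : Rsp -> X}.
Context {h : Rsp * TZ R -> Y} {L : Y -> Y -> R}.
Hypothesis PhiK : cancel Phi Psi.
Hypothesis mPsi : measurable_fun setT Psi.
Hypothesis mh : measurable_fun setT h.
Hypothesis L_ge0 : forall y y', (0 <= L y y')%R.
Hypothesis mL : measurable_fun setT (fun yy : Y * Y => L yy.1 yy.2).
Context {B : R} {g : Rsp * TZ R -> R}.
Hypothesis B_gt0 : (0 < B)%R.
Hypothesis unit_loss_Psi :
  forall r tz, unit_loss Py L h Phi (Psi r) tz = (B * g (r, tz))%:E.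

Local Notation ell := (unit_loss Py L h Phi).

Lemma unit_loss_ge0 x tz : 0 <= ell x tz.
Proof. by apply: integral_ge0 => y _; rewrite lee_fin. Qed.

Lemma measurable_unit_loss : measurable_fun setT (fun p : X * TZ R => ell p.1 p.2).
Proof.
have -> : (fun p : X * TZ R => ell p.1 p.2) =
    fun p => \int[Py p]_y (L y (h (Phi p.1, p.2)))%:E by apply/funext => -[].
apply: (measurable_fun_integral_finite_kernel
  (fun q : (X * TZ R) * Y => (L q.2 (h (Phi q.1.1, q.1.2)))%:E)).
- by move=> q; rewrite lee_fin.
apply/measurable_EFinP.
apply: (measurableT_comp (f := fun yy : Y * Y => L yy.1 yy.2)
  (g := fun q : (X * TZ R) * Y => (q.2, h (Phi q.1.1, q.1.2))) mL).
apply: measurable_fun_pair; first exact: measurable_snd.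
apply: measurableT_comp mh _; apply: measurable_fun_pair.
  exact: measurableT_comp mPhi (measurableT_comp measurable_fst measurable_fst).
exact: measurableT_comp measurable_snd measurable_fst.
Qed.

Lemma unit_lossE x tz : ell x tz = B%:E * (g (Phi x, tz))%:E.
Proof. by rewrite -{1}(PhiK x) unit_loss_Psi EFinM. Qed.

Lemma normalized_loss_ge0 u : 0 <= (g u)%:E.
Proof.
have := unit_loss_ge0 (Psi u.1) u.2; rewrite unit_loss_Psi -surjective_pairing.
by rewrite !lee_fin pmulr_rge0.
Qed.

Lemma measurable_normalized_loss : measurable_fun setT (fun u => (g u)%:E).
Proof.
have -> : (fun u => (g u)%:E) = fun u => (B^-1)%:E * ell (Psi u.1) u.2.
  apply/funext => u; rewrite unit_loss_Psi -surjective_pairing -EFinM.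
  by rewrite mulKf // gt_eqF.
apply: measurable_funeM.
apply: (measurableT_comp (f := fun p : X * TZ R => ell p.1 p.2)
  (g := fun u : Rsp * TZ R => (Psi u.1, u.2)) measurable_unit_loss).
exact: measurable_fun_pair (measurableT_comp mPsi measurable_fst) measurable_snd.
Qed.

Let scaled_loss_ge0 u : 0 <= B%:E * (g u)%:E.
Proof. by apply: mule_ge0; [rewrite lee_fin ltW | exact: normalized_loss_ge0]. Qed.

Let measurable_scaled_loss : measurable_fun setT (fun u => B%:E * (g u)%:E).
Proof. exact: measurable_funeM measurable_normalized_loss. Qed.

HB.instance Definition _ := isMeasurableFun.Build _ _ _ _ Phi mPhi.

Lemma eps_CF_integral : eps_CF PT Px ell =
  B%:E * \int[pushforward (marginal_x PT Px) Phi \x PT]_u (g u)%:E.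
Proof.
rewrite -[pushforward _ Phi]/(distribution (marginal_x PT Px) Phi).
rewrite -ge0_integralZl_EFin //; last 3 first.
- by move=> u _; exact: normalized_loss_ge0.
- exact: measurable_normalized_loss.
- exact: ltW.
rewrite integral_distribution_product; last 2 first.
- exact: measurable_scaled_loss.
- exact: scaled_loss_ge0.
apply: eq_integral => tz _; rewrite -integral_marginal_x; last 2 first.
- by move=> x; exact: unit_loss_ge0.
- exact: measurable_fun_pair1 measurable_unit_loss.
by apply: eq_integral => x _; rewrite unit_lossE.
Qed.

Let reweighted_prob tz : probability X R := [the probability X R of reweighted Px w tz].

Local Notation reweighted_joint :=
  (joint_cond PT (fun tz => pushforward (reweighted Px w tz) Phi)).

Lemma eps_F_eta_integral :
  eps_F_eta PT Px w ell = B%:E * \int[reweighted_joint]_u (g u)%:E.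
Proof.
have reweighted_jointE := integral_joint_cond_pushforward PT reweighted_prob measurable_reweighted
  Phi mPhi.
rewrite -(ge0_integral_joint_cond_pushforwardZl PT reweighted_prob measurable_reweighted
  Phi mPhi); last 3 first.
- exact: normalized_loss_ge0.
- exact: measurable_normalized_loss.
- exact: ltW.
rewrite reweighted_jointE; last 2 first.
- exact: scaled_loss_ge0.
- exact: measurable_scaled_loss.
by apply: eq_integral => tz _; apply: eq_integral => x _; rewrite unit_lossE.
Qed.

Lemma integral_reweighted_joint_ge0 : 0 <= \int[reweighted_joint]_u (g u)%:E.
Proof.
rewrite (integral_joint_cond_pushforward PT reweighted_prob measurable_reweighted Phi mPhi).
- by apply: integral_ge0 => tz _; apply: integral_ge0 => x _; exact: normalized_loss_ge0.
- exact: normalized_loss_ge0.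
- exact: measurable_normalized_loss.
Qed.

End counterfactual.
End reweighted.
Theorem lemma1 (R : realType) (dX dR dY : measure_display)
  (X : measurableType dX) (Rsp : measurableType dR) (Y : measurableType dY)
  (PT : probability (TZ R) R)
  (Px : R.-pker TZ R ~> X)
  (Py : R.-pker (X * TZ R) ~> Y)
  (Phi : X -> Rsp) (Psi : Rsp -> X)
  (h : Rsp * TZ R -> Y) (L : Y -> Y -> R)
  (w : TZ R -> X -> R)
  (G : set (Rsp * TZ R -> R)) (B : R) :
  PT (setT `*` [set z : R | (0 <= z <= 1)%R]) = 1 ->
  cancel Phi Psi -> cancel Psi Phi ->
  measurable_fun setT Phi -> measurable_fun setT Psi ->
  measurable_fun setT h ->
  (forall y y', (0 <= L y y')%R) ->
  measurable_fun setT (fun yy : Y * Y => L yy.1 yy.2) ->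
  (forall tz x, (0 < w tz x)%R) ->
  measurable_fun setT (fun p : TZ R * X => w p.1 p.2) ->
  (forall tz, 0 < \int[Px tz]_x (w tz x)%:E < +oo) ->
  (0 < B)%R ->
  (exists2 g, G g &
     forall r tz, unit_loss Py L h Phi (Psi r) tz = (B * g (r, tz))%:E) ->
  eps_CF PT Px (unit_loss Py L h Phi)
  <= eps_F_eta PT Px w (unit_loss Py L h Phi)
     + B%:E * IPM G (pushforward (marginal_x PT Px) Phi \x PT)
                    (joint_cond PT (fun tz => pushforward (reweighted Px w tz) Phi)).
Proof.
move=> _ PhiK _ mPhi mPsi mh L_ge0 mL w_gt0 mw wnorm_fin B_gt0 [g Gg unit_loss_Psi].
rewrite (eps_CF_integral mPhi PhiK mPsi mh L_ge0 mL B_gt0 unit_loss_Psi).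
rewrite (eps_F_eta_integral w_gt0 mw wnorm_fin mPhi PhiK mPsi mh L_ge0 mL B_gt0
  unit_loss_Psi).
apply: integral_le_add_IPM Gg (ltW B_gt0) _.
exact: (integral_reweighted_joint_ge0 w_gt0 mw wnorm_fin mPhi mPsi mh L_ge0 mL B_gt0
  unit_loss_Psi).
Qed.
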